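(* Let $d\ge1$, let $Z$ be a simple $d$-cycle, and let $D\subseteq\mathrm{Supp}(Z)$. Then the graph obtained from $G_d(Z)$ by deleting the vertices corresponding to $D$ has at most $1+\tilde\beta_{d-1}(K(D))$ connected components, where $\tilde\beta_{d-1}(K(D))=\dim\tilde H_{d-1}(K(D))$.
   Context: Fix a field $\mathbb F$. A $d$-simplex is a $(d+1)$-element subset of $[n]$ oriented by increasing order $s_1<\dots<s_{d+1}$; the empty set is the $(-1)$-simplex. A $d$-chain is a formal $\mathbb F$-combination of $d$-simplices with support the set of simplices with nonzero coefficient; $\partial\sigma=\sum_i(-1)^{i-1}(\sigma\setminus\{s_i\})$, extended linearly (reduced convention). A $d$-cycle is a chain with $\partial Z=0$; it is simple if $Z\ne0$ and every $d$-cycle supported in $\mathrm{Supp}(Z)$ is a scalar multiple of $Z$. For a set $S$ of simplices, $K(S)$ is the complex of all subsets of members of $S$; $\tilde H_{d-1}(K)$ is the space of $(d-1)$-cycles supported on $K$ modulo $\{\partial B: B$ a $d$-chain supported on $K\}$. The facet graph $G_d(Z)$ has vertex set $\mathrm{Supp}(Z)$, two $d$-simplices adjacent iff they share a $(d-1)$-face. *)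

From HB Require Import structures.
From mathcomp Require Import all_boot all_order all_algebra.
Set Implicit Arguments. Unset Strict Implicit. Unset Printing Implicit Defensive.
Import Order.TTheory GRing.Theory Num.Theory.
Local Open Scope ring_scope.

(* Simplices on the vertex set [n] = 'I_n are finite sets of vertices; a
   k-simplex is a set of size k+1 (the empty set is the (-1)-simplex).  A k-chain is a chain
   supported on k-simplices. *)
Definition chain (F : fieldType) (n : nat) := {ffun {set 'I_n} -> F^o}.

Definition simp_chain (F : fieldType) (n : nat) (s : {set 'I_n}) : chain F n :=
  [ffun t => (t == s)%:R].

(* boundary of an oriented simplex s = {s_1 < ... < s_{k+1}}:
   sum_i (-1)^(i-1) (s \ {s_i}); the position of x in s minus one is the
   number of elements of s smaller than x. *)
Definition bd_simp (F : fieldType) (n : nat) (s : {set 'I_n}) : chain F n :=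
  \sum_(x in s) (-1) ^+ #|[set y in s | (y < x)%N]| *: simp_chain F (s :\ x).

Definition bd (F : fieldType) (n : nat) (c : chain F n) : chain F n :=
  \sum_(s : {set 'I_n}) c s *: bd_simp F s.

Lemma bd_is_linear (F : fieldType) (n : nat) : linear (@bd F n).
Proof.
move=> a u v; rewrite /bd scaler_sumr -big_split /=; apply: eq_bigr => s _.
by rewrite !ffunE scalerDl scalerA.
Qed.

HB.instance Definition _ (F : fieldType) (n : nat) :=
  GRing.isLinear.Build F (chain F n) (chain F n) *:%R (@bd F n) (@bd_is_linear F n).

Definition supp (F : fieldType) (n : nat) (c : chain F n) : {set {set 'I_n}} :=
  [set s | c s != 0].

Definition is_chain_of_dim (F : fieldType) (n : nat) (k : nat) (c : chain F n) : Prop :=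
  forall s, s \in supp c -> #|s| = k.+1.

Definition is_cycle (F : fieldType) (n : nat) (k : nat) (c : chain F n) : Prop :=
  is_chain_of_dim k c /\ bd c = 0.

Definition simple_cycle (F : fieldType) (n : nat) (d : nat) (Z : chain F n) : Prop :=
  [/\ is_cycle d Z, Z != 0 &
      forall W : chain F n, is_cycle d W -> supp W \subset supp Z ->
        exists c : F, W = c *: Z].

Definition cplx (n : nat) (S : {set {set 'I_n}}) : {set {set 'I_n}} :=
  [set t : {set 'I_n} | [exists s in S, t \subset s]].

Definition chains_on (F : fieldType) (n : nat) (K : {set {set 'I_n}}) (k : nat)
  : {vspace chain F n} :=
  <<[seq simp_chain F s | s <- enum [set s in K | #|s| == k.+1]]>>%VS.

Definition cycles_on (F : fieldType) (n : nat) (K : {set {set 'I_n}}) (k : nat)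
  : {vspace chain F n} :=
  (chains_on F K k :&: lker (linfun (@bd F n)))%VS.

Definition bounds_on (F : fieldType) (n : nat) (K : {set {set 'I_n}}) (k : nat)
  : {vspace chain F n} :=
  (linfun (@bd F n) @: chains_on F K k.+1)%VS.

(* reduced Betti number: dim of H~_k(K) = Z_k(K) / B_k(K) (B_k <= Z_k) *)
Definition rbetti (F : fieldType) (n : nat) (K : {set {set 'I_n}}) (k : nat) : nat :=
  (\dim (cycles_on F K k) - \dim (bounds_on F K k))%N.

(* facet graph: d-simplices adjacent iff they share a (d-1)-face *)
Definition facet_adj (n : nat) (d : nat) (s t : {set 'I_n}) : bool :=
  (s != t) && (#|s :&: t| == d).

Definition induced_adj (n : nat) (d : nat) (V : {set {set 'I_n}}) : rel {set 'I_n} :=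
  fun s t => [&& s \in V, t \in V & facet_adj d s t].

Definition n_components (n : nat) (d : nat) (V : {set {set 'I_n}}) : nat :=
  #|[set [set t in V | connect (induced_adj d V) s t] | s in V]|.

From HB Require Import structures.
From mathcomp Require Import all_boot all_order all_algebra.
From mathcomp Require Import zify.
Import GRing.Theory.

(* Let C_1, ..., C_k be the components of G_d(Z) - D and Z_i the restriction of
   Z to C_i.  A (d-1)-face t lying in no simplex of D has all its Z-facets
   outside D and pairwise adjacent, hence in a single component; there the
   coefficient of dZ_i is that of dZ = 0, so dZ_i is a (d-1)-cycle of K(D).
   The Z_i span a k-dimensional space X.  If w in X has dw = db for a d-chain b
   of K(D), then b lives on D and w - b is a cycle supported on Supp(Z), a
   multiple of Z by simplicity; hence w is a multiple of Z restricted off D.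
   So X -> H_{d-1}(K(D)) has a kernel of dimension at most 1. *)

Set Implicit Arguments. Unset Strict Implicit. Unset Printing Implicit Defensive.
Local Open Scope ring_scope.

Lemma dimv_leq_cap_preim (K : fieldType) (aT rT : vectType K) (f : 'Hom(aT, rT))
    (X : {vspace aT}) (B Y : {vspace rT}) :
  (f @: X <= Y)%VS -> (B <= Y)%VS ->
  (\dim X <= \dim (X :&: f @^-1: B) + (\dim Y - \dim B))%N.
Proof.
move=> fXY BY; set X' := (X :&: f @^-1: B)%VS.
have dim_sum : (\dim (f @: X + B) <= \dim Y)%N by apply: dimvS; rewrite subv_add fXY.
have img_cap : (\dim (f @: X :&: B) <= \dim (f @: X'))%N.
  apply: dimvS; apply/subvP => _ /memv_capP[/memv_imgP[x xX ->] fxB].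
  by apply: memv_img; rewrite memv_cap xX -memv_preim.
have ker_cap : (\dim (X :&: lker f) <= \dim (X' :&: lker f))%N.
  apply: dimvS; apply/subvP => x /memv_capP[xX xk].
  rewrite memv_cap xk andbT memv_cap xX -memv_preim.
  by move: xk; rewrite memv_ker => /eqP ->; rewrite mem0v.
have := dimv_sum_cap (f @: X) B; have := limg_ker_dim f X'; have := limg_ker_dim f X.
lia.
Qed.

Lemma card_setI_facets (T : finType) (s1 s2 t : {set T}) k :
  #|s1| = k.+1 -> #|s2| = k.+1 -> s1 != s2 -> t \subset s1 -> t \subset s2 -> #|t| = k ->
  #|s1 :&: s2| = k.
Proof.
move=> c1 c2 s12 ts1 ts2 ct; apply/eqP; rewrite eqn_leq -{2}ct subset_leq_card ?subsetI ?ts1 //.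
rewrite -ltnS -c1 ltn_neqAle (subset_leq_card (subsetIl _ _)) !andbT.
apply: contraNN s12 => /eqP e.
have e1 : s1 :&: s2 = s1 by apply/eqP; rewrite eqEcard subsetIl e leqnn.
by rewrite eqEcard c1 c2 leqnn andbT -e1 subsetIr.
Qed.

Section Chains.
Variables (F : fieldType) (n : nat).
Implicit Types (s t : {set 'I_n}) (S K : {set {set 'I_n}}) (c : chain F n).

Definition chain_restr S c : chain F n := [ffun s => if s \in S then c s else 0].

Lemma chain_restr_is_linear S : linear (chain_restr S).
Proof.
by move=> a u v; apply/ffunP => s; rewrite !ffunE; case: (s \in S); rewrite ?scaler0 ?addr0.
Qed.

HB.instance Definition _ S := GRing.isLinear.Build F (chain F n) (chain F n) *:%R
  (chain_restr S) (chain_restr_is_linear S).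

Lemma supp_chain_restr S c : supp (chain_restr S c) = S :&: supp c.
Proof. by apply/setP => s; rewrite !inE ffunE; case: (s \in S); rewrite ?eqxx. Qed.

Lemma supp_subP c S : reflect (forall s, c s != 0 -> s \in S) (supp c \subset S).
Proof.
by apply: (iffP subsetP) => cS s; [move=> nz; apply: cS; rewrite inE | rewrite inE => /cS].
Qed.

Lemma mem_lker_chain_restrC S c :
  (c \in lker (linfun (chain_restr (~: S)))) = (supp c \subset S).
Proof.
rewrite memv_ker lfunE /=; apply/eqP/supp_subP => [/ffunP cS s nz | cS].
  by apply: contraT => sS; have := cS s; rewrite !ffunE inE sS => /eqP; rewrite (negPf nz).
apply/ffunP => s; rewrite !ffunE inE; case: ifP => // sS.
by apply: contraTeq sS => /cS ->.
Qed.

Lemma chain_restr_simp S c : chain_restr S c = \sum_(s in S) c s *: simp_chain F s.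
Proof.
apply/ffunP => t; rewrite sum_ffunE !ffunE.
have [tS | tS] := boolP (t \in S); last first.
  rewrite big1 // => s sS; rewrite !ffunE.
  by have [ts|_] := eqVneq t s; [rewrite ts sS in tS | rewrite scaler0].
rewrite (bigD1 t) //= big1 ?addr0 => [|s /andP[_ st]].
  by rewrite !ffunE eqxx [_ *: _]mulr1.
by rewrite !ffunE eq_sym (negPf st) scaler0.
Qed.

Lemma mem_span_simp_chain S c :
  (c \in <<[seq simp_chain F s | s <- enum S]>>%VS) = (supp c \subset S).
Proof.
apply/idP/idP => [cS | /supp_subP cS].
  rewrite -mem_lker_chain_restrC; apply: subvP cS; apply/span_subvP => _ /mapP[s sS ->].
  rewrite mem_lker_chain_restrC; apply/supp_subP => t; rewrite ffunE.
  by have [->|_] := eqVneq t s; [rewrite -mem_enum | rewrite eqxx].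
have -> : c = chain_restr S c.
  by apply/ffunP => s; rewrite ffunE; case: ifP => // /negbT; apply: contraNeq => /cS.
rewrite chain_restr_simp; apply: memv_suml => s sS; apply/memvZ/memv_span.
by apply/mapP; exists s; rewrite ?mem_enum.
Qed.

Lemma mem_chains_on K k c :
  (c \in chains_on F K k) = (supp c \subset [set s in K | #|s| == k.+1]).
Proof. exact: mem_span_simp_chain. Qed.

Lemma bd_simp_chain s : bd (simp_chain F s) = bd_simp F s.
Proof.
rewrite /bd (bigD1 s) //= big1 ?addr0 => [|t /negPf ts]; last by rewrite ffunE ts scale0r.
by rewrite ffunE eqxx scale1r.
Qed.

Lemma bdbd_simp s : bd (bd_simp F s) = 0.
Proof.
rewrite {1}/bd_simp linear_sum /=.
under eq_bigr => x _ do rewrite linearZ /= bd_simp_chain /bd_simp scaler_sumr.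
pose sgn (u : {set 'I_n}) (x : 'I_n) : F := (-1) ^+ #|[set z in u | (z < x)%N]|.
pose f x y := sgn s x *: (sgn (s :\ x) y *: simp_chain F (s :\ x :\ y)).
rewrite -/(\sum_(x in s) \sum_(y in s :\ x) f x y).
have split_lt_gt x : \sum_(y in s :\ x) f x y =
    \sum_(y | (y \in s) && (y < x)%N) f x y + \sum_(y | (y \in s) && (x < y)%N) f x y.
  rewrite (bigID (fun y : 'I_n => (y < x)%N)) /=; congr (_ + _); apply: eq_bigl => y.
    by rewrite in_setD1; have [->|] := eqVneq y x; rewrite ?ltnn ?andbF.
  rewrite in_setD1 -leqNgt; have [->|yx] := eqVneq y x; first by rewrite ltnn !andbF.
  by rewrite ltn_neqAle val_eqE eq_sym yx andbC.
rewrite (eq_bigr _ (fun x _ => split_lt_gt x)) big_split /=.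
rewrite (exchange_big_dep (fun y => y \in s)) /=; last by move=> ? ? _ /andP[].
rewrite -big_split /= big1 // => x xs.
rewrite (eq_bigl (fun y => (y \in s) && (x < y)%N)) => [|y]; last by rewrite xs.
rewrite -big_split /= big1 // => y /andP[ys xy].
(* removing x < y from s shifts the position of y by one, but not that of x *)
have sgn_x : sgn (s :\ y) x = sgn s x.
  rewrite /sgn; congr (_ ^+ _); apply: eq_card => z; rewrite !inE.
  by have [->|] := eqVneq z y; rewrite ?ltnNge ?(ltnW xy) ?andbF.
have sgn_y : sgn s y = - sgn (s :\ x) y.
  rewrite /sgn [in LHS](cardsD1 x) !inE xs xy /= exprS mulN1r; congr (- (_ ^+ _)).
  by apply: eq_card => z; rewrite !inE; case: (z != x).
rewrite /f sgn_x sgn_y; have -> : s :\ y :\ x = s :\ x :\ y by rewrite !setDDl setUC.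
by rewrite !scalerA -scalerDl mulNr mulrC addNr scale0r.
Qed.

Lemma bdbd c : bd (bd c) = 0.
Proof. by rewrite {2}/bd linear_sum big1 // => s _; rewrite linearZ /= bdbd_simp scaler0. Qed.

Lemma bd_simp_face s t : bd_simp F s t != 0 -> exists2 x, x \in s & t = s :\ x.
Proof.
rewrite /bd_simp sum_ffunE => nz; suff /exists_inP[x xs /eqP] : [exists x in s, t == s :\ x].
  by exists x.
apply: contraNT nz => /exists_inPn tx; rewrite big1 // => x /tx /negPf tsx.
by rewrite !ffunE tsx scaler0.
Qed.

Lemma bd_face c t : bd c t != 0 -> exists2 s, c s != 0 & bd_simp F s t != 0.
Proof.
rewrite /bd sum_ffunE => nz; apply/exists_inP; apply: contraNT nz => /exists_inPn cs.
rewrite big1 // => s _; rewrite ffunE.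
by have [-> | /cs /negPn /eqP ->] := eqVneq (c s) 0; rewrite ?scale0r ?scaler0.
Qed.

Lemma bd_mem_cycles_on K k c :
  (bd c \in cycles_on F K k) = (supp (bd c) \subset [set s in K | #|s| == k.+1]).
Proof. by rewrite memv_cap memv_ker lfunE /= bdbd eqxx andbT mem_chains_on. Qed.

Lemma bounds_on_subv_cycles_on K k :
  (forall s t, s \in K -> t \subset s -> t \in K) ->
  (bounds_on F K k <= cycles_on F K k)%VS.
Proof.
move=> K_down; apply/subvP => _ /memv_imgP[c cK ->]; rewrite lfunE bd_mem_cycles_on.
move: cK; rewrite mem_chains_on => /supp_subP cK.
apply/supp_subP => t /bd_face[s /cK] /[!inE] /andP[sK /eqP cs] /bd_simp_face[x xs ->].
rewrite (K_down s) ?subD1set //=.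
by move: cs; rewrite (cardsD1 x s) xs add1n => -[->].
Qed.

Lemma free_chain_restr c (P : {set {set {set 'I_n}}}) :
  trivIset P -> set0 \notin P -> cover P \subset supp c ->
  free [seq chain_restr C c | C <- enum P].
Proof.
move=> tiP P0 Pc; set L := [seq _ | _ <- _]; have : free (in_tuple L); last by [].
have sizeL : size L = size (enum P) by rewrite size_map.
have blockP (i : 'I_(size L)) : nth set0 (enum P) i \in P by rewrite -mem_enum mem_nth -?sizeL.
apply/freeP => k sum0 i; have Ci := blockP i.
have [a aCi] : exists a, a \in nth set0 (enum P) i.
  by apply/set0Pn; apply: contraNneq P0 => <-.
have : a \in supp c by apply: (subsetP Pc); apply/bigcupP; exists (nth set0 (enum P) i).
rewrite inE => ca.
move/ffunP: sum0 => /(_ a); rewrite sum_ffunE (bigD1 i) //= big1 => [|j ji].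
  rewrite !ffunE addr0 (nth_map set0) -?sizeL // ffunE aCi => /eqP.
  by rewrite mulf_eq0 (negPf ca) orbF => /eqP.
rewrite !ffunE (nth_map set0) -?sizeL // ffunE; case: ifP => aCj; last by rewrite scaler0.
suff : nth set0 (enum P) j = nth set0 (enum P) i.
  by move/eqP; rewrite nth_uniq ?enum_uniq -?sizeL // val_eqE (negPf ji).
apply: contraTeq isT => Cji; have /trivIsetP /(_ _ _ (blockP j) Ci Cji) := tiP.
by move/disjointFr => /(_ _ aCj); rewrite aCi.
Qed.

Lemma dim_span_chain_restr c (P : {set {set {set 'I_n}}}) :
  trivIset P -> set0 \notin P -> cover P \subset supp c ->
  \dim <<[seq chain_restr C c | C <- enum P]>>%VS = #|P|.
Proof. by move=> tiP P0 Pc; rewrite (eqP (free_chain_restr tiP P0 Pc)) size_map cardE. Qed.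

End Chains.

Lemma cplx_sub n (S : {set {set 'I_n}}) (s t : {set 'I_n}) :
  s \in cplx S -> t \subset s -> t \in cplx S.
Proof.
rewrite !inE => /exists_inP[u uS su] ts; apply/exists_inP; exists u => //.
exact: subset_trans ts su.
Qed.

Section FacetGraph.
Variables (F : fieldType) (n d : nat) (Z : chain F n) (D : {set {set 'I_n}}).
Hypothesis Zcycle : is_cycle d.+1 Z.
Hypothesis DZ : D \subset supp Z.

Let V := supp Z :\: D.
Let adj := induced_adj d.+1 V.
Let P := equivalence_partition (connect adj) V.

Lemma card_supp_cycle s : Z s != 0 -> #|s| = d.+2.
Proof. by move=> Zs; apply: Zcycle.1; rewrite inE. Qed.

Lemma cplx_facet t : t \in cplx D -> #|t| = d.+2 -> t \in D.
Proof.
rewrite inE => /exists_inP[s sD ts] ct; suff -> : t = s by [].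
have /card_supp_cycle cs : Z s != 0 by have := subsetP DZ s sD; rewrite inE.
by apply/eqP; rewrite eqEcard ts ct cs leqnn.
Qed.

Lemma bd_chain_restr_cycles_on (C : {set {set 'I_n}}) :
  C \subset V -> {in C, forall s1 s, adj s1 s -> s \in C} ->
  bd (chain_restr C Z) \in cycles_on F (cplx D) d.
Proof.
move=> CV C_closed; rewrite bd_mem_cycles_on; apply/supp_subP => t nz; rewrite inE.
have [s1 + /bd_simp_face[x xs1 tE]] := bd_face nz; rewrite ffunE.
case: ifP => [s1C Zs1 | _]; last by rewrite eqxx.
have ct : #|t| = d.+1.
  by move: (card_supp_cycle Zs1); rewrite (cardsD1 x s1) xs1 tE => -[].
rewrite ct eqxx andbT; apply: contraT => tD.
(* t is a face of no simplex of D, so every facet of Z through t is adjacent to s1 *)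
have facets_in_C s : Z s != 0 -> bd_simp F s t != 0 -> s \in C.
  move=> Zs /bd_simp_face[y _ tEs]; have [<- // | s1s] := eqVneq s1 s.
  have ts : t \subset s by rewrite tEs subD1set.
  have sV : s \in V.
    rewrite !inE Zs andbT; apply: contra tD => sD.
    by rewrite inE; apply/exists_inP; exists s.
  apply: (C_closed s1) => //; rewrite /adj /induced_adj (subsetP CV s1 s1C) sV /facet_adj s1s.
  have ts1 : t \subset s1 by rewrite tE subD1set.
  by rewrite (card_setI_facets (card_supp_cycle Zs1) (card_supp_cycle Zs) s1s ts1 ts ct) eqxx.
suff : bd (chain_restr C Z) t = bd Z t by rewrite Zcycle.2 ffunE => /eqP; rewrite (negPf nz).
rewrite /bd !sum_ffunE; apply: eq_bigr => s _; rewrite !ffunE; case: ifP => // sC.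
have [-> | Zs] := eqVneq (Z s) 0; first by [].
have [-> | bs] := eqVneq (bd_simp F s t) 0; first by rewrite !scaler0.
by rewrite facets_in_C in sC.
Qed.

Lemma connect_adj_equivalence : equivalence_rel (connect adj).
Proof.
have adj_sym : connect_sym adj.
  apply: sym_connect_sym => s t; rewrite /adj /induced_adj /facet_adj.
  by rewrite andbA [(s \in V) && _]andbC -andbA eq_sym setIC.
move=> s t u; split=> [|st]; first exact: connect0.
apply/idP/idP => [su | tu]; first by apply: connect_trans su; rewrite adj_sym.
exact: connect_trans st tu.
Qed.

Lemma components_partition : partition P V.
Proof. by apply: equivalence_partitionP; apply: in3W; apply: connect_adj_equivalence. Qed.

Lemma component_closed C : C \in P -> {in C, forall s1 s, adj s1 s -> s \in C}.
Proof.
case/and3P: components_partition => /eqP coverP tiP _ CP s1 s1C s s1s.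
have s1V : s1 \in V by rewrite -coverP; apply/bigcupP; exists C.
have sV : s \in V by case/and3P: s1s.
rewrite -(def_pblock tiP CP s1C) pblock_equivalence_partition ?connect1 //.
by apply: in3W; apply: connect_adj_equivalence.
Qed.

Lemma component_sub C : C \in P -> C \subset V.
Proof.
by case/and3P: components_partition => /eqP <- _ _ CP; apply: bigcup_sup.
Qed.

Lemma bd_bounds_mem_vline w : simple_cycle d.+1 Z -> supp w \subset V ->
  bd w \in bounds_on F (cplx D) d -> w \in <[chain_restr (~: D) Z]>%VS.
Proof.
move=> [_ _ Zsimple] /supp_subP wV /memv_imgP[b]; rewrite mem_chains_on lfunE /=.
move=> /supp_subP bD bdwb.
have bD' s : b s != 0 -> s \in D.
  by move=> /bD; rewrite inE => /andP[/cplx_facet sD /eqP /sD].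
have wbZ s : (w - b) s != 0 -> Z s != 0.
  rewrite !ffunE; have [-> | /bD' sD] := eqVneq (b s) 0.
    by rewrite subr0 => /wV; rewrite !inE => /andP[].
  by have := subsetP DZ s sD; rewrite inE.
have wb_cycle : is_cycle d.+1 (w - b).
  by split=> [s | ]; [rewrite inE => /wbZ /card_supp_cycle | rewrite linearB /= bdwb subrr].
have [|k wbE] := Zsimple _ wb_cycle; first by apply/supp_subP => s /wbZ; rewrite inE.
apply/vlineP; exists k; apply/ffunP => s; move/ffunP: wbE => /(_ s); rewrite !ffunE inE.
case: ifP => [/negbTE sD | /negbFE sD _].
  have -> : b s = 0 by apply/eqP; apply: contraFT sD => /bD'.
  by rewrite subr0.
have -> : w s = 0 by apply/eqP; apply: contraT => /wV; rewrite inE sD.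
by rewrite scaler0.
Qed.

Lemma span_component_restr_supp w :
  w \in <<[seq chain_restr C Z | C <- enum P]>>%VS -> supp w \subset V.
Proof.
rewrite -mem_span_simp_chain; apply: subvP; apply/span_subvP => _ /mapP[C CP ->].
rewrite mem_span_simp_chain supp_chain_restr mem_enum in CP *.
exact: subset_trans (subsetIl _ _) (component_sub CP).
Qed.

Lemma n_components_leq_rbetti :
  simple_cycle d.+1 Z -> (n_components d.+1 V <= 1 + rbetti F (cplx D) d)%N.
Proof.
move=> simZ; change (#|P| <= 1 + rbetti F (cplx D) d)%N.
set L := [seq chain_restr C Z | C <- enum P].
set f := linfun (@bd F n).
have bd_span_cycles : (f @: <<L>> <= cycles_on F (cplx D) d)%VS.
  rewrite limg_span; apply/span_subvP => _ /mapP[_ /mapP[C CP ->] ->].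
  rewrite mem_enum in CP; rewrite lfunE /=.
  exact: bd_chain_restr_cycles_on (component_sub CP) (component_closed CP).
have dim_preim : (\dim (<<L>> :&: f @^-1: bounds_on F (cplx D) d) <= 1)%N.
  apply: leq_trans (leq_b1 (chain_restr (~: D) Z != 0)); rewrite -dim_vline; apply: dimvS.
  apply/subvP => w /memv_capP[/span_component_restr_supp wV]; rewrite -memv_preim lfunE.
  exact: bd_bounds_mem_vline.
case/and3P: components_partition => /eqP coverP tiP P0.
have := dimv_leq_cap_preim bd_span_cycles (bounds_on_subv_cycles_on _ _ (@cplx_sub n D)).
rewrite dim_span_chain_restr ?coverP ?subsetDl // => /leq_trans; apply.
by rewrite leq_add2r.
Qed.

End FacetGraph.

Theorem corollary5p2 (F : fieldType) (n d : nat) (Z : chain F n)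
    (D : {set {set 'I_n}}) :
  (1 <= d)%N -> simple_cycle d Z -> D \subset supp Z ->
  (n_components d (supp Z :\: D) <= 1 + rbetti F (cplx D) d.-1)%N.
Proof.
case: d => [//|d] _ simZ DZ.
have [Zcycle _ _] := simZ; exact: n_components_leq_rbetti Zcycle DZ simZ.
Qed.
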